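(* Let $\mathcal{U}$ be a dead-ending universe and let $G$ be any finite partizan game. Then $G$ is Left $\mathcal{U}$-strong if and only if $o(G+X)\geq\mathscr{N}$ for all $X\in T_n(\mathcal{U})$, where $n$ is the formal birthday of $G$.
   Context: $o(G)$ is the misère outcome class, ordered $\mathscr{L} > \mathscr{N} > \mathscr{R}$, $\mathscr{L} > \mathscr{P} > \mathscr{R}$. A universe is a set of finite partizan games closed under options, disjunctive sums, conjugates, and forming $\{\mathscr{G}^L\mid\mathscr{G}^R\}$ from nonempty finite subsets of it. A Left end has no Left option; a Left dead-end is a game all of whose subpositions are Left ends (similarly Right). A universe is dead-ending if in every game of it, every subposition that is an end is a dead-end. $G$ is Left $\mathcal{U}$-strong if $o(G+X)\geq\mathscr{N}$ for every Left end $X\in\mathcal{U}$. The formal birthday of $G$ is the height of its game tree. The truncation is $\tau_0(G)=0$, $\tau_{n+1}(G)=\{\tau_n(G^L)\mid\tau_n(G^R)\}$. For Left dead-ends, $G\geq H$ means $o(G+X)\geq o(H+X)$ for all $X$ in every universe. Let $\mathcal{A}$ be the set of Left ends of $\mathcal{U}$ and $\operatorname{cl}(\mathcal{A})$ the smallest set containing $\mathcal{A}$ closed under options and sums; the test set $T_n(\mathcal{U})$ is the set of minimal elements (with respect to $\geq$) of $\{\tau_n(G):G\in\operatorname{cl}(\mathcal{A})\}$. *)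

From Stdlib Require List.
From mathcomp Require Import all_boot.
Set Implicit Arguments. Unset Strict Implicit. Unset Printing Implicit Defensive.

Inductive game : Type := Game of seq game & seq game.

Definition lopts (G : game) : seq game := let: Game l _ := G in l.
Definition ropts (G : game) : seq game := let: Game _ r := G in r.

Definition is_option (H G : game) : Prop := List.In H (lopts G) \/ List.In H (ropts G).

Inductive subpos : game -> game -> Prop :=
| subpos_refl G : subpos G G
| subpos_opt H K G : is_option K G -> subpos H K -> subpos H G.

Fixpoint gadd (G H : game) {struct G} : game :=
  let fix addH (H : game) : game :=
    match G, H with
    | Game gl gr, Game hl hr =>
        Game ([seq gadd g H | g <- gl] ++ [seq addH h | h <- hl])
             ([seq gadd g H | g <- gr] ++ [seq addH h | h <- hr])
    end in addH H.

Fixpoint conj (G : game) : game :=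
  match G with Game gl gr => Game [seq conj g | g <- gr] [seq conj g | g <- gl] end.

(* Misere play (a player unable to move wins).
   win G = (Left wins moving first in G, Right wins moving first in G). *)
Fixpoint win (G : game) : bool * bool :=
  match G with
  | Game gl gr =>
      (nilp gl || has (fun g => ~~ (win g).2) gl,
       nilp gr || has (fun g => ~~ (win g).1) gr)
  end.

Inductive outcome := oL | oN | oP | oR.

Definition o (G : game) : outcome :=
  match win G with
  | (true, false) => oL
  | (true, true) => oN
  | (false, false) => oP
  | (false, true) => oR
  end.

Definition outcome_le (a b : outcome) : bool :=
  match a, b with
  | oR, _ => true
  | _, oL => true
  | oN, oN => true
  | oP, oP => true
  | _, _ => false
  end.

Definition left_end (G : game) : Prop := lopts G = [::].
Definition right_end (G : game) : Prop := ropts G = [::].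
Definition left_dead_end (G : game) : Prop := forall H, subpos H G -> left_end H.
Definition right_dead_end (G : game) : Prop := forall H, subpos H G -> right_end H.

Definition universe (U : game -> Prop) : Prop :=
  (forall G H, U G -> is_option H G -> U H) /\
  (forall G H, U G -> U H -> U (gadd G H)) /\
  (forall G, U G -> U (conj G)) /\
  (forall gl gr : seq game, gl <> [::] -> gr <> [::] ->
      (forall g, List.In g gl -> U g) -> (forall g, List.In g gr -> U g) ->
      U (Game gl gr)).

Definition dead_ending (U : game -> Prop) : Prop :=
  forall G, U G -> forall H, subpos H G ->
    (left_end H -> left_dead_end H) /\ (right_end H -> right_dead_end H).

Definition left_strong (U : game -> Prop) (G : game) : Prop :=
  forall X, U X -> left_end X -> outcome_le oN (o (gadd G X)).

Fixpoint birthday (G : game) : nat :=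
  match G with
  | Game gl gr => maxn (foldr (fun g m => maxn (birthday g).+1 m) 0 gl)
                   (foldr (fun g m => maxn (birthday g).+1 m) 0 gr)
  end.

Fixpoint trunc (n : nat) (G : game) : game :=
  match n with
  | 0 => Game [::] [::]
  | n'.+1 => Game [seq trunc n' g | g <- lopts G] [seq trunc n' g | g <- ropts G]
  end.

Definition gge (G H : game) : Prop :=
  forall X, outcome_le (o (gadd H X)) (o (gadd G X)).

Inductive cl (U : game -> Prop) : game -> Prop :=
| cl_base X : U X -> left_end X -> cl U X
| cl_opt G H : cl U G -> is_option H G -> cl U H
| cl_sum G H : cl U G -> cl U H -> cl U (gadd G H).

Definition trunc_set (U : game -> Prop) (n : nat) (X : game) : Prop :=
  exists G, cl U G /\ X = trunc n G.

Definition test_set (U : game -> Prop) (n : nat) (X : game) : Prop :=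
  trunc_set U n X /\ (forall Y, trunc_set U n Y -> gge X Y -> gge Y X).

From Stdlib Require Import RelationClasses.
From mathcomp Require Import all_boot boolp.
Set Implicit Arguments. Unset Strict Implicit. Unset Printing Implicit Defensive.

(* Every Left end of a dead-ending universe is a Left dead end, so in G + X
   Left can only move in G.  Hence, by induction on G, the winner of G + X with
   Left moving first does not change when X is truncated at depth n = birthday G
   (with Right moving first the depth must exceed n, as Right may move in X):
   o(G + X) >= N iff o(G + tau_n X) >= N.
   Conversely, the games born by day n fall into finitely many classes of games
   interchangeable in every sum, so below tau_n X there is a minimal truncation
   Z, i.e. an element of T_n(U); then o(G + Z) >= N and tau_n X >= Z give
   o(G + tau_n X) >= N. *)

(* Recurses on [s] so that [game_ind'] passes the guard checker. *)
Fixpoint In_forall (A : Type) (P : A -> Prop) (f : forall x, P x) (s : seq A) :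
  forall x, List.In x s -> P x :=
  match s return forall x, List.In x s -> P x with
  | [::] => fun x h => False_ind _ h
  | y :: s' => fun x h =>
      match h with
      | or_introl e => eq_ind y P (f y) x e
      | or_intror h' => In_forall f h'
      end
  end.

Definition game_ind' (P : game -> Prop)
    (IH : forall l r, (forall g, List.In g l -> P g) ->
                      (forall g, List.In g r -> P g) -> P (Game l r)) :
  forall G, P G :=
  fix F G := let: Game l r := G in IH l r (@In_forall _ _ F l) (@In_forall _ _ F r).

Lemma hasP_In (A : Type) (p : pred A) (s : seq A) :
  reflect (exists2 x, List.In x s & p x) (has p s).
Proof.
elim: s => [|y s IHs] /=; first by right; case.
apply: (iffP orP) => [[py | /IHs [x sx px]] | [x [<- | sx] px]].
- by exists y; [left|].
- by exists x; [right|].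
- by left.
- by right; apply/IHs; exists x.
Qed.

Lemma eq_has_In (A : Type) (p q : pred A) (s : seq A) :
  (forall x, List.In x s -> p x = q x) -> has p s = has q s.
Proof.
move=> pq; apply/hasP_In/hasP_In => -[x sx px]; exists x => //.
  by rewrite -pq.
by rewrite pq.
Qed.

Definition corresp (A B : Type) (R : A -> B -> Prop) (s : seq A) (t : seq B) :=
  (forall a, List.In a s -> exists2 b, List.In b t & R a b) /\
  (forall b, List.In b t -> exists2 a, List.In a s & R a b).

Lemma corresp_nilp A B (R : A -> B -> Prop) s t : corresp R s t -> nilp s = nilp t.
Proof.
case: s t => [|a s] [|b t] // [st ts].
  by have [] := ts b (or_introl erefl).
by have [] := st a (or_introl erefl).
Qed.

Lemma corresp_has A B (R : A -> B -> Prop) (p : pred A) (q : pred B) s t :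
  corresp R s t -> (forall a b, List.In a s -> R a b -> p a = q b) ->
  has p s = has q t.
Proof.
move=> [st ts] pq; apply/hasP_In/hasP_In => [[a sa pa] | [b tb qb]].
  by have [b tb ab] := st a sa; exists b; rewrite // -(pq a).
by have [a sa ab] := ts b tb; exists a; rewrite // (pq a b).
Qed.

Lemma InP (T : eqType) (x : T) (s : seq T) : reflect (List.In x s) (x \in s).
Proof.
elim: s => [|y s IHs]; first by rewrite in_nil; right.
rewrite inE; apply: (iffP orP) => [[/eqP-> | /IHs] | [<- | /IHs]];
  by [left | right].
Qed.

Lemma gadd_lopts A B :
  lopts (gadd A B) = [seq gadd a B | a <- lopts A] ++ [seq gadd A b | b <- lopts B].
Proof. by case: A => ? ?; case: B. Qed.

Lemma gadd_ropts A B :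
  ropts (gadd A B) = [seq gadd a B | a <- ropts A] ++ [seq gadd A b | b <- ropts B].
Proof. by case: A => ? ?; case: B. Qed.

Lemma win1E G : (win G).1 = nilp (lopts G) || has (fun g => ~~ (win g).2) (lopts G).
Proof. by case: G. Qed.

Lemma win2E G : (win G).2 = nilp (ropts G) || has (fun g => ~~ (win g).1) (ropts G).
Proof. by case: G. Qed.

Lemma nilp_map (A B : Type) (f : A -> B) (s : seq A) : nilp (map f s) = nilp s.
Proof. by case: s. Qed.

Lemma win_gaddC A B : win (gadd A B) = win (gadd B A).
Proof.
have swap (n1 n2 a b c d : bool) :
  a = d -> b = c -> n1 && n2 || (a || b) = n2 && n1 || (c || d).
  by move=> -> ->; rewrite andbC (orbC d).
elim/game_ind': A B => la ra IHla IHra B.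
elim/game_ind': B => lb rb IHlb IHrb.
rewrite [LHS]surjective_pairing [RHS]surjective_pairing !win1E !win2E.
rewrite !gadd_lopts !gadd_ropts !cat_nilp !nilp_map !has_cat !has_map.
congr pair; apply: swap; apply: eq_has_In => g sg /=.
- by rewrite IHla.
- by rewrite IHlb.
- by rewrite IHra.
- by rewrite IHrb.
Qed.

Definition win_equiv (Y Z : game) := forall W, win (gadd Y W) = win (gadd Z W).

Lemma win_equiv_sym Y Z : win_equiv Y Z -> win_equiv Z Y.
Proof. by move=> YZ W; rewrite YZ. Qed.

Lemma win_equiv_opts Y Z :
  corresp win_equiv (lopts Y) (lopts Z) -> corresp win_equiv (ropts Y) (ropts Z) ->
  win_equiv Y Z.
Proof.
move=> eqL eqR W; elim/game_ind': W => wl wr IHl IHr.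
rewrite [LHS]surjective_pairing [RHS]surjective_pairing !win1E !win2E.
rewrite !gadd_lopts !gadd_ropts !cat_nilp !nilp_map !has_cat !has_map.
congr (pair (_ && _ || (_ || _)) (_ && _ || (_ || _))).
- exact: corresp_nilp eqL.
- by apply: (corresp_has eqL) => a b _ /= ->.
- by apply: eq_has_In => w sw /=; rewrite IHl.
- exact: corresp_nilp eqR.
- by apply: (corresp_has eqR) => a b _ /= ->.
- by apply: eq_has_In => w sw /=; rewrite IHr.
Qed.

Lemma outcome_le_refl a : outcome_le a a.
Proof. by case: a. Qed.

Lemma outcome_le_trans a b c : outcome_le a b -> outcome_le b c -> outcome_le a c.
Proof. by case: a; case: b; case: c. Qed.

Lemma outcome_leNE Y : outcome_le oN (o Y) = (win Y).1.
Proof. by rewrite /o; case: (win Y) => [[] []]. Qed.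

Lemma outcome_le_win1 Y Z : outcome_le (o Y) (o Z) -> (win Y).1 -> (win Z).1.
Proof. by rewrite /o; case: (win Y) => [[] []]; case: (win Z) => [[] []]. Qed.

Lemma gge_trans G H K : gge G H -> gge H K -> gge G K.
Proof. by move=> GH HK X; apply: outcome_le_trans (HK X) (GH X). Qed.

Lemma win_equiv_gge Y Z : win_equiv Y Z -> gge Y Z.
Proof. by move=> YZ X; rewrite /o YZ; apply: outcome_le_refl. Qed.

Lemma birthday_leP G n :
  birthday G <= n <-> forall g, is_option g G -> birthday g < n.
Proof.
have fold_leP s : foldr (fun g m => maxn (birthday g).+1 m) 0 s <= n <->
                  forall g, List.In g s -> birthday g < n.
  elim: s => [|x s IHs] /=; first by [].
  rewrite geq_max; split=> [/andP[xn /IHs sn] g [<- | /sn] // | sn].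
  by rewrite sn /=; [apply/IHs => g gs; apply: sn; right | left].
case: G => l r; rewrite [birthday _]/= geq_max.
split=> [/andP[/fold_leP ln /fold_leP rn] g [/ln | /rn] // | gn].
by apply/andP; split; apply/fold_leP => g gs; apply: gn; [left | right].
Qed.

Lemma birthday_opt g G : is_option g G -> birthday g < birthday G.
Proof. exact: (birthday_leP G _).1 (leqnn _) g. Qed.

Lemma birthday_trunc n G : birthday (trunc n G) <= n.
Proof.
elim: n G => [|n IHn] G //; apply/birthday_leP => g.
by case=> /List.in_map_iff [h [<- _]]; apply: IHn.
Qed.

Lemma left_dead_end_left_end X : left_dead_end X -> left_end X.
Proof. by move=> dX; apply: dX (subpos_refl X). Qed.

Lemma left_dead_end_opt X Y : left_dead_end X -> is_option Y X -> left_dead_end Y.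
Proof. by move=> dX oYX H sHY; apply: dX (subpos_opt oYX sHY). Qed.

Lemma subpos_gadd H A B : subpos H (gadd A B) ->
  exists A' B', [/\ subpos A' A, subpos B' B & H = gadd A' B'].
Proof.
move Ec: (gadd A B) => C sHC.
elim: sHC A B Ec => [C0 | {}H K C0 oKC _ IHK] A B Ec; subst C0.
  by exists A, B; split=> //; apply: subpos_refl.
have [[a [oaA EK]] | [b [obB EK]]] :
    (exists a, is_option a A /\ gadd a B = K) \/
    (exists b, is_option b B /\ gadd A b = K).
  by case: oKC; rewrite ?gadd_lopts ?gadd_ropts =>
    /List.in_app_iff [] /List.in_map_iff [x [<- ox]]; [left | right | left | right];
    exists x; split=> //; [left | left | right | right].
- have [A' [B' [sA' sB' ->]]] := IHK a B EK.
  by exists A', B'; split=> //; apply: subpos_opt oaA sA'.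
- have [A' [B' [sA' sB' ->]]] := IHK A b EK.
  by exists A', B'; split=> //; apply: subpos_opt obB sB'.
Qed.

Lemma left_dead_end_gadd A B :
  left_dead_end A -> left_dead_end B -> left_dead_end (gadd A B).
Proof.
move=> dA dB H /subpos_gadd [A' [B' [sA' sB' ->]]].
by rewrite /left_end gadd_lopts (dA A' sA') (dB B' sB').
Qed.

Lemma left_end_trunc k X : left_end X -> left_end (trunc k X).
Proof. by case: k => //= k ->. Qed.

Lemma win_gadd_trunc G X k : left_dead_end X -> birthday G <= k ->
  (win (gadd G (trunc k X))).1 = (win (gadd G X)).1 /\
  (birthday G < k -> (win (gadd G (trunc k X))).2 = (win (gadd G X)).2).
Proof.
elim/game_ind': G X k => l r IHl IHr X k dX bGk.
have left_first X' k' : left_dead_end X' -> birthday (Game l r) <= k' ->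
    (win (gadd (Game l r) (trunc k' X'))).1 = (win (gadd (Game l r) X')).1.
  move=> dX' bGk'; have lX' := left_dead_end_left_end dX'.
  rewrite win1E [RHS]win1E !gadd_lopts (left_end_trunc k' lX') lX'.
  rewrite !cats0 !nilp_map !has_map.
  congr orb; apply: eq_has_In => g lg /=; congr negb.
  have bg := leq_trans (birthday_opt (or_introl lg)) bGk'.
  exact: (IHl g lg X' k' dX' (ltnW bg)).2 bg.
split=> [|bGk1]; first exact: left_first.
case: k bGk bGk1 => // k _ bGk1.
rewrite win2E [RHS]win2E !gadd_ropts !cat_nilp !nilp_map !has_cat !has_map.
congr (_ && _ || (_ || _)).
- apply: eq_has_In => g rg /=; congr negb.
  have bg := ltn_trans (birthday_opt (or_intror rg)) bGk1.
  exact: (IHr g rg X k.+1 dX (ltnW bg)).1.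
- apply: eq_has_In => x rx /=; congr negb.
  exact: left_first (left_dead_end_opt dX (or_intror rx)) bGk1.
Qed.

Lemma cl_universe U H : universe U -> cl U H -> U H.
Proof.
move=> [optU [sumU _]]; elim=> // [G {}H _ UG oHG | G {}H _ UG _ UH].
- exact: optU oHG.
- exact: sumU.
Qed.

Lemma dead_ending_left_end U X : dead_ending U -> U X -> left_end X -> left_dead_end X.
Proof. by move=> dU UX; case: (dU X UX X (subpos_refl X)). Qed.

Lemma cl_left_dead_end U H : dead_ending U -> cl U H -> left_dead_end H.
Proof.
move=> dU; elim=> [X UX lX | G {}H _ dG oHG | G {}H _ dG _ dH].
- exact: dead_ending_left_end UX lX.
- exact: left_dead_end_opt dG oHG.
- exact: left_dead_end_gadd.
Qed.

Fixpoint game_form (n : nat) : finType :=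
  if n is m.+1 then ({set game_form m} * {set game_form m})%type else unit.

Fixpoint game_of_form n : game_form n -> game :=
  match n with
  | 0 => fun _ => Game [::] [::]
  | m.+1 => fun c => Game [seq game_of_form x | x in c.1] [seq game_of_form x | x in c.2]
  end.

Lemma game_form_cover n Y :
  birthday Y <= n -> exists c : game_form n, win_equiv Y (game_of_form c).
Proof.
elim/game_ind': Y n => l r IHl IHr [|n] bY.
  have noopt g : ~ is_option g (Game l r) by move/birthday_opt/leq_trans/(_ bY).
  exists tt; apply: win_equiv_opts; split=> [a sa | b []];
    exfalso; apply: (noopt a); by [left | right].
pose opts s := [set x : game_form n |
                `[< exists2 a, List.In a s & win_equiv a (game_of_form x) >]].
have optsP s :
    (forall a, List.In a s -> exists x : game_form n, win_equiv a (game_of_form x)) ->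
    corresp win_equiv s [seq game_of_form x | x in opts s].
  move=> IHs; split=> [a sa | _ /List.in_map_iff [x [<- /InP]]].
    have [x ax] := IHs a sa; exists (game_of_form x) => //.
    by apply: List.in_map; apply/InP; rewrite mem_enum inE; apply/asboolP; exists a.
  by rewrite mem_enum inE => /asboolP.
have bopt g : is_option g (Game l r) -> birthday g <= n.
  by move=> og; rewrite -ltnS; apply: leq_trans (birthday_opt og) bY.
exists (opts l, opts r); apply: win_equiv_opts; apply: optsP => a sa.
- by apply: IHl => //; apply: bopt; left.
- by apply: IHr => //; apply: bopt; right.
Qed.

Lemma exists_minimal_below (T : finType) (A : Type) (ge : A -> A -> Prop)
    (S : A -> Prop) (f : T -> A) :
  Transitive ge ->
  (forall y, S y -> exists t, ge (f t) y /\ ge y (f t)) ->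
  forall y, S y -> exists2 z, S z & ge y z /\ forall w, S w -> ge z w -> ge w z.
Proof.
move=> ge_trans cover y Sy.
pose P t := `[< exists2 s, S s & ge (f t) s /\ ge s (f t) >].
pose below t := [set u | P u && `[< ge (f t) (f u) >]].
pose C t := P t && `[< ge y (f t) >].
have [t0 [t0y yt0]] := cover y Sy.
have Ct0 : C t0 by apply/andP; split; apply/asboolP => //; exists y.
(* Among the classes below [y], take one with the fewest classes below it. *)
case: (@arg_minnP _ t0 C (fun t => #|below t|) Ct0) => t /andP[Pt /asboolP yt] t_min.
have [s Ss [ts st]] := asboolP _ Pt.
exists s => //; split=> [|w Sw sw]; first by transitivity (f t).
have [u [uw wu]] := cover w Sw.
have tu : ge (f t) (f u) by transitivity s => //; transitivity w.
suff ut : ge (f u) (f t) by transitivity (f u) => //; transitivity (f t).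
apply: contrapT => not_ut.
have Pu : P u by apply/asboolP; exists w.
have : below u \proper below t.
  apply/properP; split.
    apply/subsetP => v; rewrite !inE => /andP[-> /asboolP uv].
    by apply/asboolP; transitivity (f u).
  exists t; rewrite !inE Pt /=; last by apply/asboolP.
  by apply/asboolP; transitivity s.
move/proper_card; rewrite ltnNge t_min //.
by rewrite /C Pu; apply/asboolP; transitivity (f t).
Qed.

Theorem mainTheorem4 (U : game -> Prop) (G : game) :
  universe U -> dead_ending U ->
  (left_strong U G <->
   forall X, test_set U (birthday G) X -> outcome_le oN (o (gadd G X))).
Proof.
move=> uU dU; split=> [strongG X [[H [clH ->]] _] | testG X UX lX].
  have dH := cl_left_dead_end dU clH.
  rewrite outcome_leNE (win_gadd_trunc dH (leqnn (birthday G))).1 -outcome_leNE.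
  exact: strongG (cl_universe uU clH) (left_dead_end_left_end dH).
set n := birthday G.
have dX := dead_ending_left_end dU UX lX.
have cover Y : trunc_set U n Y ->
    exists c : game_form n, gge (game_of_form c) Y /\ gge Y (game_of_form c).
  move=> [H [_ ->]]; have [c Hc] := game_form_cover (birthday_trunc n H).
  by exists c; split; apply: win_equiv_gge; first apply: win_equiv_sym.
have trX : trunc_set U n (trunc n X) by exists X; split=> //; apply: cl_base.
have [Z trZ [XZ Zmin]] := exists_minimal_below gge_trans cover trX.
have := testG Z (Logic.conj trZ Zmin); rewrite outcome_leNE win_gaddC => winZG.
rewrite outcome_leNE -(win_gadd_trunc dX (leqnn n)).1 win_gaddC.
exact: outcome_le_win1 (XZ G) winZG.
Qed.
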